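(* Let $X$ be a semigroup. Every idempotent $e\in I\!Z(X)$ is viable.
   Context: $Z(X)=\{z\in X:\forall x\in X\ (xz=zx)\}$, $I\!Z(X)=\{z\in Z(X):zX\subseteq Z(X)\}$. For an idempotent $e$, $H_e$ is the maximal subgroup of $X$ containing $e$; $e$ is viable if $X\setminus\{x\in X: xe=ex\in H_e\}$ is an ideal in $X$ (a set $I$ with $IX\cup XI\subseteq I$). *)

Definition center {T : Type} (op : T -> T -> T) (z : T) : Prop :=
  forall x : T, op x z = op z x.

Definition ideal_center {T : Type} (op : T -> T -> T) (z : T) : Prop :=
  center op z /\ forall x : T, center op (op z x).

Definition idempotent {T : Type} (op : T -> T -> T) (e : T) : Prop :=
  op e e = e.

Definition is_subgroup {T : Type} (op : T -> T -> T) (G : T -> Prop) : Prop :=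
  (forall x y, G x -> G y -> G (op x y)) /\
  exists u, G u /\
    (forall x, G x -> op u x = x /\ op x u = x) /\
    (forall x, G x -> exists y, G y /\ op x y = u /\ op y x = u).

Definition maxsubgroup {T : Type} (op : T -> T -> T) (e : T) (x : T) : Prop :=
  exists G : T -> Prop, is_subgroup op G /\ G e /\ G x.

Definition is_ideal {T : Type} (op : T -> T -> T) (I : T -> Prop) : Prop :=
  forall x y, I x -> I (op x y) /\ I (op y x).

Definition viable {T : Type} (op : T -> T -> T) (e : T) : Prop :=
  is_ideal op (fun x => ~ (op x e = op e x /\ maxsubgroup op e (op x e))).


(* For an idempotent e, the maximal subgroup H_e is the group of units of the
   local monoid eXe.  Since e is central, x e = e x for every x, so e is viable
   as soon as (xy)e and (yx)e being units forces x e to be one.  When e lies in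
   IZ(X), (yx)e = (xy)e, and if b is the inverse of (xy)e then the central
   element e y b is an inverse of x e. *)

Section Semigroup.

Variables (T : Type) (op : T -> T -> T).
Hypothesis assoc : forall x y z : T, op x (op y z) = op (op x y) z.

Definition local_unit (e z : T) : Prop :=
  op e z = z /\ op z e = z /\
  exists w, op e w = w /\ op w e = w /\ op z w = e /\ op w z = e.

Lemma local_unit_id (e : T) : idempotent op e -> local_unit e e.
Proof.
  intros he. repeat split; try exact he. exists e. repeat split; exact he.
Qed.

Lemma local_unit_subgroup (e : T) : idempotent op e -> is_subgroup op (local_unit e).
Proof.
  intros he. split.
  - intros a c [ea [ae [a' [ea' [a'e [aa' a'a]]]]]] [ec [ce [c' [ec' [c'e [cc' c'c]]]]]].
    split; [rewrite assoc, ea; reflexivity|].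
    split; [rewrite <- assoc, ce; reflexivity|].
    exists (op c' a').
    split; [rewrite assoc, ec'; reflexivity|].
    split; [rewrite <- assoc, a'e; reflexivity|].
    split.
    + rewrite <- assoc, (assoc c c' a'), cc', (assoc a e a'), ae. exact aa'.
    + rewrite <- assoc, (assoc a' a c), a'a, (assoc c' e c), c'e. exact c'c.
  - exists e. split; [exact (local_unit_id e he)|]. split.
    + intros a [ea [ae _]]. split; assumption.
    + intros a [ea [ae [a' [ea' [a'e [aa' a'a]]]]]]. exists a'.
      repeat split; try assumption. exists a. repeat split; assumption.
Qed.

(* The identity u of a subgroup containing an idempotent e is e itself:
   u = e' e = e' (e e) = u e = e, where e' is the inverse of e. *)
Lemma subgroup_sub_local_unit (G : T -> Prop) (e : T) :
  is_subgroup op G -> G e -> idempotent op e -> forall x, G x -> local_unit e x.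
Proof.
  intros [_ [u [Gu [hid hinv]]]] Ge he.
  assert (ue : u = e).
  { destruct (hinv e Ge) as [e' [_ [_ e'e]]].
    destruct (hid e Ge) as [ue _].
    rewrite <- ue, <- e'e, <- assoc, he. reflexivity. }
  subst u. intros x Gx.
  destruct (hid x Gx) as [ex xe].
  destruct (hinv x Gx) as [x' [Gx' [xx' x'x]]].
  destruct (hid x' Gx') as [ex' x'e].
  repeat split; try assumption. exists x'. repeat split; assumption.
Qed.

Lemma maxsubgroupE (e x : T) :
  idempotent op e -> maxsubgroup op e x <-> local_unit e x.
Proof.
  intros he. split.
  - intros [G [HG [Ge Gx]]]. exact (subgroup_sub_local_unit G e HG Ge he x Gx).
  - intros Ux. exists (local_unit e).
    split; [exact (local_unit_subgroup e he)|].
    split; [exact (local_unit_id e he)|exact Ux].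
Qed.

Lemma ideal_center_mul_comm (e x y : T) :
  ideal_center op e -> op (op x y) e = op (op y x) e.
Proof.
  intros [hc hi].
  rewrite (hc (op y x)), assoc, <- (hi y x), <- (hc y), assoc. reflexivity.
Qed.

Lemma local_unit_factor (e x y : T) :
  idempotent op e -> ideal_center op e ->
  local_unit e (op (op x y) e) -> local_unit e (op x e).
Proof.
  intros he [hc hi] [_ [_ [b [eb [be [ab ba]]]]]].
  assert (xe_b : op (op x e) (op e (op y b)) = e).
  { rewrite !assoc, <- (assoc x e e), he, <- (assoc x e y), <- (hc y),
      (assoc x y e). exact ab. }
  split; [rewrite assoc, <- hc, <- assoc, he; reflexivity|].
  split; [rewrite <- assoc, he; reflexivity|].
  exists (op e (op y b)).
  split; [rewrite assoc, he; reflexivity|].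
  split; [rewrite <- !assoc, be; reflexivity|].
  split; [exact xe_b|].
  rewrite <- (hi (op y b) (op x e)). exact xe_b.
Qed.

End Semigroup.

Theorem lemma2p5 (T : Type) (op : T -> T -> T)
  (assoc : forall x y z : T, op x (op y z) = op (op x y) z)
  (e : T) (he : idempotent op e) (hIZ : ideal_center op e) :
  viable op e.
Proof.
  intros x y Hx.
  assert (xye_not_unit : local_unit T op e (op (op x y) e) -> False).
  { intros Uxy. apply Hx. split; [exact (proj1 hIZ x)|].
    apply (maxsubgroupE T op assoc e (op x e) he).
    exact (local_unit_factor T op assoc e x y he hIZ Uxy). }
  split; intros [_ Hm]; apply xye_not_unit;
    apply (maxsubgroupE T op assoc e _ he).
  - exact Hm.
  - rewrite (ideal_center_mul_comm T op assoc e x y hIZ). exact Hm.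
Qed.
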